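(* For any $n\ge2$ and $A>0$, there exists $f\in C^2[-1,1]$ with $f\le0$ on $[-1,0]$ and $f\ge0$ on $[0,1]$, such that every algebraic polynomial $P_n$ of degree $\le n$ with $P_n\le0$ on $[-1,0]$, $P_n\ge0$ on $[0,1]$ and $P_n^{(i)}(0)=f^{(i)}(0)$ for $0\le i\le2$ obeys $$\|f-P_n\|>A\,\|f''\|.$$
   Context: $\|\cdot\|$ is the sup norm on $[-1,1]$. *)

From Stdlib Require Import Reals.
From Coquelicot Require Import Coquelicot.
Open Scope R_scope.

(* f is of class C^2 (we ask this on all of R). *)
Definition C2 (f : R -> R) : Prop :=
  forall x : R, ex_derive f x /\ ex_derive (Derive f) x /\
                continuous (Derive_n f 2) x.

Definition supnorm (h : R -> R) : Rbar :=
  Lub_Rbar (fun y => exists x, -1 <= x <= 1 /\ y = Rabs (h x)).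

Definition poly_eval (n : nat) (c : nat -> R) (x : R) : R :=
  sum_n (fun k => c k * x ^ k) n.

From Stdlib Require Import Reals Factorial Lra Lia Psatz FunctionalExtensionality.
From Coquelicot Require Import Coquelicot.
Open Scope R_scope.

(* For small e > 0 take f(x) = e x - e^2 x^2 / (e^2 + x^2) (the function [corner e]).
   It has the sign of x, f(0) = 0, f'(0) = e, f''(0) = -2, |f''| <= 2 and |f| = O(e)
   on [-1,1].  An admissible P_n is e x - x^2 + (terms of degree >= 3), and
   P_n(2e) >= 0 forces one of those higher coefficients to be >~ 1/e.  By equivalence
   of norms on polynomials of degree <= n, sup_[0,1] |P_n| >~ 1/e as well, hence
   ||f - P_n|| >~ 1/e - O(e) > 2A >= A ||f''|| once e is small. *)

Lemma sum_n_single (g : nat -> R) i n :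
  (i <= n)%nat -> (forall k, k <> i -> g k = 0) -> sum_n g n = g i.
Proof.
  intros Hin Hg.
  enough (H : forall m, @eq R (sum_n g m) (if (i <=? m)%nat then g i else 0))
    by (rewrite H; apply Nat.leb_le in Hin; rewrite Hin; reflexivity).
  induction m as [|m IH].
  - rewrite sum_O. destruct (Nat.leb_spec i 0).
    + replace i with 0%nat by lia. reflexivity.
    + apply Hg; lia.
  - rewrite sum_Sn, IH.
    change ((if (i <=? m)%nat then g i else 0) + g (S m) = if (i <=? S m)%nat then g i else 0).
    destruct (Nat.leb_spec i m), (Nat.leb_spec i (S m)); try lia.
    + rewrite (Hg (S m)) by lia. ring.
    + replace i with (S m) by lia. ring.
    + rewrite (Hg (S m)) by lia. ring.
Qed.

Lemma poly_eval_S n c x : poly_eval (S n) c x = poly_eval n c x + c (S n) * x ^ S n.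
Proof. unfold poly_eval. now rewrite sum_Sn. Qed.

Lemma poly_eval_O c x : poly_eval 0 c x = c 0%nat.
Proof. unfold poly_eval. rewrite sum_O. simpl. ring. Qed.

Lemma Derive_n_poly_eval_0 n c i :
  (i <= n)%nat -> Derive_n (poly_eval n c) i 0 = INR (fact i) * c i.
Proof.
  intros Hi. unfold poly_eval.
  rewrite (Derive_n_sum_n n (fun k x => c k * x ^ k)).
  2:{ apply filter_forall. intros t l j _ _. apply ex_derive_n_scal_l, ex_derive_n_pow. }
  rewrite (sum_n_single _ i n Hi).
  2:{ intros k Hk. rewrite Derive_n_scal_l, Derive_n_pow.
      destruct Compare_dec.le_dec; [rewrite pow_i by lia|]; ring. }
  rewrite Derive_n_scal_l, Derive_n_pow.
  destruct Compare_dec.le_dec; [|lia].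
  rewrite Nat.sub_diag. simpl. field.
Qed.

Lemma poly_eval_tail_abs_le m d c t M :
  Rabs t <= 1 -> (forall k, (m < k <= m + d)%nat -> Rabs (c k) <= M) ->
  Rabs (poly_eval (m + d) c t - poly_eval m c t) <= INR d * M * Rabs t ^ S m.
Proof.
  intros Ht Hc. induction d as [|d IH].
  - rewrite Nat.add_0_r, Rminus_diag, Rabs_R0. simpl. lra.
  - rewrite Nat.add_succ_r, poly_eval_S, S_INR.
    replace (poly_eval (m + d) c t + c (S (m + d)) * t ^ S (m + d) - poly_eval m c t)
      with ((poly_eval (m + d) c t - poly_eval m c t) + c (S (m + d)) * t ^ S (m + d)) by ring.
    eapply Rle_trans; [apply Rabs_triang|].
    assert (Hd : Rabs (poly_eval (m + d) c t - poly_eval m c t) <= INR d * M * Rabs t ^ S m)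
      by (apply IH; intros k Hk; apply Hc; lia).
    assert (Hpow : Rabs t ^ S (m + d) <= Rabs t ^ S m).
    { replace (S (m + d)) with (S m + d)%nat by lia. rewrite pow_add.
      assert (Rabs t ^ d <= 1) by (rewrite <- (pow1 d); apply pow_incr; split; [apply Rabs_pos|lra]).
      pose proof (pow_le (Rabs t) (S m) (Rabs_pos t)). nra. }
    assert (Hlast : Rabs (c (S (m + d))) <= M) by (apply Hc; lia).
    rewrite Rabs_mult, <- RPow_abs.
    pose proof (Rabs_pos (c (S (m + d)))). pose proof (pow_le (Rabs t) (S (m + d)) (Rabs_pos t)).
    nra.
Qed.

Lemma poly_eval_sub_dilate m a c x :
  poly_eval m c x - a * poly_eval m c (x / 2) =
  poly_eval m (fun k => (1 - a / 2 ^ k) * c k) x.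
Proof.
  induction m as [|m IH].
  - rewrite !poly_eval_O. simpl. field.
  - rewrite !poly_eval_S, <- IH. unfold Rdiv. rewrite Rpow_mult_distr, pow_inv.
    field. apply pow_nonzero. lra.
Qed.

Lemma pow2_div_pow2_ge k n : (k <= n)%nat -> 2 <= 2 ^ S n / 2 ^ k.
Proof.
  intros Hk. replace (S n) with (S (n - k) + k)%nat by lia.
  rewrite pow_add. unfold Rdiv. rewrite Rmult_assoc, Rinv_r, Rmult_1_r by (apply pow_nonzero; lra).
  simpl. pose proof (pow_R1_Rle 2 (n - k)). lra.
Qed.

Lemma poly_coef_bound n : exists K, 0 < K /\ forall c B,
  (forall x, 0 <= x <= 1 -> Rabs (poly_eval n c x) <= B) ->
  forall k, (k <= n)%nat -> Rabs (c k) <= K * B.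
Proof.
  induction n as [|n [K [HK IH]]].
  - exists 1. split; [lra|]. intros c B HB k Hk.
    replace k with 0%nat by lia. specialize (HB 0 ltac:(lra)).
    rewrite poly_eval_O in HB. lra.
  - set (K1 := K * (1 + 2 ^ S n)).
    assert (HK1 : 0 < K1) by (pose proof (pow_lt 2 (S n)); unfold K1; nra).
    assert (Hn : 1 <= INR (S n)) by (rewrite S_INR; pose proof (pos_INR n); lra).
    exists (1 + INR (S n) * K1). split; [nra|]. intros c B HB.
    assert (B0 : 0 <= B) by (pose proof (HB 0 ltac:(lra)); pose proof (Rabs_pos (poly_eval (S n) c 0)); lra).
    (* P(x) - 2^(n+1) P(x/2) has degree <= n and its k-th coefficient is c_k times a
       factor of modulus >= 1; the top coefficient is then recovered from P(1). *)
    set (c' := fun k => (1 - 2 ^ S n / 2 ^ k) * c k).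
    assert (Hc' : forall x, 0 <= x <= 1 -> Rabs (poly_eval n c' x) <= (1 + 2 ^ S n) * B).
    { intros x Hx.
      replace (poly_eval n c' x) with (poly_eval (S n) c x - 2 ^ S n * poly_eval (S n) c (x / 2)).
      2:{ rewrite poly_eval_sub_dilate, poly_eval_S. fold c'.
          rewrite Rdiv_diag by (apply pow_nonzero; lra). ring. }
      pose proof (HB x Hx). pose proof (HB (x / 2) ltac:(lra)). pose proof (pow_lt 2 (S n)).
      eapply Rle_trans; [apply Rabs_triang|]. rewrite Rabs_Ropp, Rabs_mult, (Rabs_pos_eq (2 ^ S n)) by lra.
      nra. }
    assert (Hlow : forall k, (k <= n)%nat -> Rabs (c k) <= K1 * B).
    { intros k Hk. apply Rle_trans with (Rabs (c' k)).
      - unfold c'. rewrite Rabs_mult, (Rabs_left1 (1 - _)) by (pose proof (pow2_div_pow2_ge k n Hk); lra).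
        pose proof (pow2_div_pow2_ge k n Hk). pose proof (Rabs_pos (c k)). nra.
      - unfold K1. rewrite Rmult_assoc. exact (IH c' _ Hc' k Hk). }
    assert (Htop : Rabs (c (S n)) <= (1 + INR (S n) * K1) * B).
    { assert (H1 : Rabs (poly_eval (0 + n) c 1 - poly_eval 0 c 1) <= INR n * (K1 * B) * Rabs 1 ^ 1)
        by (apply poly_eval_tail_abs_le; [rewrite Rabs_R1; lra | intros k Hk; apply Hlow; lia]).
      rewrite Nat.add_0_l, poly_eval_O, Rabs_R1 in H1.
      pose proof (HB 1 ltac:(lra)) as H2. rewrite poly_eval_S, pow1, Rmult_1_r in H2.
      pose proof (Hlow 0%nat ltac:(lia)) as H3.
      rewrite S_INR in *. apply Rabs_le_between in H1. apply Rabs_le_between in H2.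
      apply Rabs_le_between in H3. apply Rabs_le. nra. }
    intros k Hk. destruct (Nat.eq_dec k (S n)) as [->|Hne]; [exact Htop|].
    pose proof (Hlow k ltac:(lia)).
    assert (0 <= (INR (S n) - 1) * K1 * B) by (apply Rmult_le_pos; [apply Rmult_le_pos|]; lra).
    lra.
Qed.

Lemma nonneg_poly_with_jet_coef_ge n c e M :
  (2 <= n)%nat -> 0 < e -> 2 * e <= 1 ->
  c 0%nat = 0 -> c 1%nat = e -> c 2%nat = -1 ->
  (forall k, (2 < k <= n)%nat -> Rabs (c k) <= M) ->
  0 <= poly_eval n c (2 * e) -> 1 <= 4 * INR (n - 2) * M * e.
Proof.
  intros Hn He He1 c0 c1 c2 Hc Hpos.
  assert (Htail : Rabs (poly_eval n c (2 * e) - poly_eval 2 c (2 * e))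
                  <= INR (n - 2) * M * Rabs (2 * e) ^ 3).
  { replace n with (2 + (n - 2))%nat at 1 by lia.
    apply poly_eval_tail_abs_le; [rewrite Rabs_pos_eq; lra | intros k Hk; apply Hc; lia]. }
  assert (Hquad : poly_eval 2 c (2 * e) = - 2 * e ^ 2)
    by (rewrite !poly_eval_S, poly_eval_O, c0, c1, c2; ring).
  rewrite Hquad, (Rabs_pos_eq (2 * e)) in Htail by lra.
  apply Rabs_le_between in Htail.
  apply Rmult_le_reg_r with (2 * e ^ 2); [nra|]. nra.
Qed.

Definition corner (e x : R) : R := e * x - e ^ 2 + e ^ 4 / (e ^ 2 + x ^ 2).
Definition corner1 (e x : R) : R := e - 2 * e ^ 4 * x / (e ^ 2 + x ^ 2) ^ 2.
Definition corner2 (e x : R) : R := e ^ 4 * (6 * x ^ 2 - 2 * e ^ 2) / (e ^ 2 + x ^ 2) ^ 3.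

Section Corner.

Variable e : R.
Hypothesis He : 0 < e.

Let denom_pos x : 0 < e ^ 2 + x ^ 2.
Proof. nra. Qed.

Lemma is_derive_corner x : is_derive (corner e) x (corner1 e x).
Proof.
  unfold corner, corner1. pose proof (denom_pos x).
  auto_derive; [lra|]. field. lra.
Qed.

Lemma is_derive_corner1 x : is_derive (corner1 e) x (corner2 e x).
Proof.
  unfold corner1, corner2. pose proof (denom_pos x).
  auto_derive; [apply Rgt_not_eq, Rmult_lt_0_compat; nra|]. field. lra.
Qed.

Lemma Derive_corner : Derive (corner e) = corner1 e.
Proof. apply functional_extensionality. intro x. apply is_derive_unique, is_derive_corner. Qed.

Lemma Derive_corner1 : Derive (corner1 e) = corner2 e.
Proof. apply functional_extensionality. intro x. apply is_derive_unique, is_derive_corner1. Qed.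

Lemma Derive_n_corner_2 : Derive_n (corner e) 2 = corner2 e.
Proof. change (Derive (Derive (corner e)) = corner2 e). now rewrite Derive_corner, Derive_corner1. Qed.

Lemma C2_corner : C2 (corner e).
Proof.
  intros x. split; [|split].
  - eexists. apply is_derive_corner.
  - rewrite Derive_corner. eexists. apply is_derive_corner1.
  - rewrite Derive_n_corner_2. apply (@ex_derive_continuous R_AbsRing R_NormedModule).
    unfold corner2. pose proof (denom_pos x). auto_derive. apply Rgt_not_eq, Rmult_lt_0_compat; nra.
Qed.

Lemma corner_jet_0 :
  Derive_n (corner e) 0 0 = 0 /\ Derive_n (corner e) 1 0 = e /\ Derive_n (corner e) 2 0 = -2.
Proof.
  split; [|split].
  - change (corner e 0 = 0). unfold corner. field. lra.
  - change (Derive (corner e) 0 = e). rewrite Derive_corner. unfold corner1. field. lra.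
  - rewrite Derive_n_corner_2. unfold corner2. field. lra.
Qed.

Lemma corner_factor x : corner e x = e * x * (e ^ 2 - e * x + x ^ 2) / (e ^ 2 + x ^ 2).
Proof. unfold corner. field. pose proof (denom_pos x). lra. Qed.

Lemma corner_nonpos x : x <= 0 -> corner e x <= 0.
Proof.
  intros Hx. rewrite corner_factor. pose proof (denom_pos x).
  apply Rmult_le_0_r; [|apply Rlt_le, Rinv_0_lt_compat; lra].
  assert (Hq : 0 < e ^ 2 - e * x + x ^ 2) by (pose proof (pow2_ge_0 (x - e / 2)); nra).
  apply Rmult_le_0_r; [nra | lra].
Qed.

Lemma corner_nonneg x : 0 <= x -> 0 <= corner e x.
Proof.
  intros Hx. rewrite corner_factor. pose proof (denom_pos x).
  apply Rmult_le_pos; [|apply Rlt_le, Rinv_0_lt_compat; lra].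
  assert (Hq : 0 < e ^ 2 - e * x + x ^ 2) by (pose proof (pow2_ge_0 (x - e / 2)); nra).
  apply Rmult_le_pos; [nra | lra].
Qed.

Lemma corner_abs_le x : Rabs (corner e x) <= e * Rabs x + e ^ 2.
Proof.
  pose proof (denom_pos x).
  assert (Hq : 0 <= e ^ 2 * x ^ 2 / (e ^ 2 + x ^ 2) <= e ^ 2).
  { split; [apply Rdiv_le_0_compat; nra|].
    apply Rmult_le_reg_r with (e ^ 2 + x ^ 2); [lra|].
    unfold Rdiv. rewrite Rmult_assoc, Rinv_l, Rmult_1_r by lra. nra. }
  replace (corner e x) with (e * x - e ^ 2 * x ^ 2 / (e ^ 2 + x ^ 2)) by (unfold corner; field; lra).
  eapply Rle_trans; [apply Rabs_triang|]. rewrite Rabs_Ropp, Rabs_mult, (Rabs_pos_eq e) by lra.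
  rewrite (Rabs_pos_eq (_ / _)) by lra. lra.
Qed.

Lemma corner2_abs_le x : Rabs (corner2 e x) <= 2.
Proof.
  unfold corner2. set (a := e ^ 2). set (s := x ^ 2).
  assert (0 < a) by (unfold a; nra). assert (0 <= s) by (unfold s; nra).
  replace (e ^ 4) with (a ^ 2) by (unfold a; ring).
  assert (Hd : 0 < (a + s) ^ 3) by (apply pow_lt; lra).
  unfold Rdiv. rewrite Rabs_mult, Rabs_inv, (Rabs_pos_eq ((a + s) ^ 3)) by lra.
  apply Rmult_le_reg_r with ((a + s) ^ 3); [lra|].
  rewrite Rmult_assoc, Rinv_l, Rmult_1_r by lra.
  rewrite Rabs_mult, (Rabs_pos_eq (a ^ 2)) by nra.
  assert (0 <= a ^ 2 * s) by nra. assert (0 <= a * s ^ 2) by nra.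
  assert (0 <= s ^ 3) by (apply pow_le; lra). assert (0 < a ^ 3) by (apply pow_lt; lra).
  replace ((a + s) ^ 3) with (a ^ 3 + 3 * a ^ 2 * s + 3 * a * s ^ 2 + s ^ 3) by ring.
  destruct (Rle_lt_dec 0 (6 * s - 2 * a)).
  - rewrite Rabs_pos_eq by lra. nra.
  - rewrite Rabs_left by lra. nra.
Qed.

End Corner.

Lemma poly_coefs_of_corner_jet n c e : (2 <= n)%nat -> 0 < e ->
  (forall i, (i <= 2)%nat -> Derive_n (poly_eval n c) i 0 = Derive_n (corner e) i 0) ->
  c 0%nat = 0 /\ c 1%nat = e /\ c 2%nat = -1.
Proof.
  intros Hn He Hjet.
  destruct (corner_jet_0 e He) as [F0 [F1 F2]].
  pose proof (Hjet 0%nat ltac:(lia)) as J0. pose proof (Hjet 1%nat ltac:(lia)) as J1.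
  pose proof (Hjet 2%nat ltac:(lia)) as J2.
  rewrite F0 in J0. rewrite F1 in J1. rewrite F2 in J2.
  rewrite Derive_n_poly_eval_0 in J0, J1, J2 by lia. simpl in J0, J1, J2.
  repeat split; lra.
Qed.

Lemma supnorm_ge h x : -1 <= x <= 1 -> Rbar_le (Rabs (h x)) (supnorm h).
Proof. intros Hx. apply (proj1 (Lub_Rbar_correct _)). now exists x. Qed.

Lemma supnorm_le h M : (forall x, -1 <= x <= 1 -> Rabs (h x) <= M) ->
  exists m, supnorm h = Finite m /\ m <= M.
Proof.
  intros H.
  assert (Hup : Rbar_le (supnorm h) M).
  { apply (proj2 (Lub_Rbar_correct _)). intros y [x [Hx ->]]. exact (H x Hx). }
  assert (Hlow := supnorm_ge h 0 ltac:(lra)).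
  destruct (supnorm h) as [m| |]; [now exists m | contradiction | contradiction].
Qed.

Lemma Rabs_le_of_supnorm_sub_le f g d x : -1 <= x <= 1 ->
  Rbar_le (supnorm (fun t => f t - g t)) (Finite d) -> Rabs (g x) <= Rabs (f x) + d.
Proof.
  intros Hx Hd.
  assert (Hfg : Rabs (f x - g x) <= d) by exact (Rbar_le_trans _ _ _ (supnorm_ge _ x Hx) Hd).
  pose proof (Rabs_triang_inv (g x) (f x)). rewrite Rabs_minus_sym in Hfg. lra.
Qed.

Theorem lemma3p12 (n : nat) (A : R) :
  (2 <= n)%nat -> 0 < A ->
  exists f : R -> R,
    C2 f /\
    (forall x, -1 <= x <= 0 -> f x <= 0) /\
    (forall x, 0 <= x <= 1 -> 0 <= f x) /\
    forall c : nat -> R,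
      (forall x, -1 <= x <= 0 -> poly_eval n c x <= 0) ->
      (forall x, 0 <= x <= 1 -> 0 <= poly_eval n c x) ->
      (forall i : nat, (i <= 2)%nat ->
         Derive_n (poly_eval n c) i 0 = Derive_n f i 0) ->
      Rbar_lt (Rbar_mult (Finite A) (supnorm (Derive_n f 2)))
              (supnorm (fun x => f x - poly_eval n c x)).
Proof.
  intros Hn HA. destruct (poly_coef_bound n) as [K [HK HKc]].
  set (L := 4 * INR (n - 2) * K * (2 * A + 1)).
  assert (HL : 0 <= L) by (unfold L; pose proof (pos_INR (n - 2)); apply Rmult_le_pos; nra).
  set (e := / (L + 4)).
  assert (He : 0 < e) by (apply Rinv_0_lt_compat; lra).
  assert (HeL : e * (L + 4) = 1) by (unfold e; field; lra).
  assert (He4 : e <= 1 / 4) by nra.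
  exists (corner e). split; [|split; [|split]].
  - exact (C2_corner e He).
  - intros x Hx. apply corner_nonpos; lra.
  - intros x Hx. apply corner_nonneg; lra.
  - intros c _ Hpos Hjet.
    destruct (poly_coefs_of_corner_jet n c e Hn He Hjet) as [c0 [c1 c2]].
    destruct (supnorm_le (Derive_n (corner e) 2) 2) as [m [Hm Hm2]].
    { intros x _. rewrite Derive_n_corner_2 by exact He. apply corner2_abs_le, He. }
    rewrite Hm. apply Rbar_not_le_lt. intros Hclose.
    assert (HP : forall x, 0 <= x <= 1 -> Rabs (poly_eval n c x) <= 2 * A + 1).
    { intros x Hx. pose proof (Rabs_le_of_supnorm_sub_le _ _ _ x ltac:(lra) Hclose).
      pose proof (corner_abs_le e He x). rewrite (Rabs_pos_eq x) in * by lra. nra. }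
    assert (Hlarge := nonneg_poly_with_jet_coef_ge n c e (K * (2 * A + 1)) Hn He ltac:(lra)
                        c0 c1 c2 (fun k Hk => HKc c _ HP k ltac:(lia)) (Hpos (2 * e) ltac:(lra))).
    unfold L in HeL. nra.
Qed.
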